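(* Let $(\mathcal{X},\mathcal{B})$ be a $2$-IPPS$(4,v)$. If $B_1,B_2\in\mathcal{B}$ are distinct blocks with $|B_1\cap B_2|=2$, then there is no block $B'\in\mathcal{B}\setminus\{B_1,B_2\}$ such that $B_i\setminus(B_1\cap B_2)\subseteq B'$ for some $i\in\{1,2\}$.
   Context: A $(w,v)$ set system is a pair $(\mathcal{X},\mathcal{B})$ with $|\mathcal{X}|=v$ and $\mathcal{B}$ a family of $w$-element subsets (blocks) of $\mathcal{X}$. For a $w$-subset $T\subseteq\mathcal{X}$ let $P_t(T)=\{\mathcal{P}\subseteq\mathcal{B}: |\mathcal{P}|\le t,\ T\subseteq\bigcup_{B\in\mathcal{P}}B\}$. The set system is a $t$-IPPS$(w,v)$ if for every $w$-subset $T\subseteq\mathcal{X}$, either $P_t(T)=\emptyset$ or $\bigcap_{\mathcal{P}\in P_t(T)}\mathcal{P}\neq\emptyset$. *)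

From mathcomp Require Import all_boot.
Set Implicit Arguments. Unset Strict Implicit. Unset Printing Implicit Defensive.

Definition set_system (X : finType) (w v : nat) (Bs : {set {set X}}) : Prop :=
  #|X| = v /\ forall B, B \in Bs -> #|B| = w.

Definition Pt (X : finType) (Bs : {set {set X}}) (t : nat) (T : {set X})
  : {set {set {set X}}} :=
  [set P in powerset Bs | (#|P| <= t) && (T \subset \bigcup_(B in P) B)].

Definition IPPS (X : finType) (t w v : nat) (Bs : {set {set X}}) : Prop :=
  set_system w v Bs /\
  forall T : {set X}, #|T| = w ->
    Pt Bs t T = set0 \/ \bigcap_(P in Pt Bs t T) P != set0.

From mathcomp Require Import all_boot.

Set Implicit Arguments. Unset Strict Implicit. Unset Printing Implicit Defensive.

(* If a third block B' contained B1 \ B2, then the 4-set B1 would be covered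
   by each of the pairs {B1, B2}, {B1, B'} and {B2, B'}; these three members of
   P_2(B1) have no block in common, contradicting the identifiable-parent
   property. *)

Section IdentifiableParents.

Variables (X : finType) (t w v : nat) (Bs : {set {set X}}).
Hypotheses (hIPPS : IPPS t w v Bs) (t_ge2 : 1 < t).

Lemma pair_in_Pt (T A B : {set X}) :
  A \in Bs -> B \in Bs -> T \subset A :|: B -> [set A; B] \in Pt Bs t T.
Proof.
move=> hA hB hT; rewrite /Pt inE powersetE; apply/and3P; split.
- by apply/subsetP=> C /set2P[]->.
- by apply: leq_trans t_ge2; rewrite cards2; case: (A == B).
- apply: (subset_trans hT); rewrite subUset.
  by rewrite !(bigcup_sup _ (F := id)) ?set21 ?set22.
Qed.

Lemma IPPS_no_pairwise_cover3 (T A B C : {set X}) :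
  #|T| = w -> A \in Bs -> B \in Bs -> C \in Bs ->
  A != B -> A != C -> B != C ->
  T \subset A :|: B -> T \subset A :|: C -> T \subset B :|: C -> False.
Proof.
move=> hT hA hB hC nAB nAC nBC sAB sAC sBC.
have pAB := pair_in_Pt hA hB sAB.
have pAC := pair_in_Pt hA hC sAC.
have pBC := pair_in_Pt hB hC sBC.
case: hIPPS => _ /(_ T hT) [Pt0 | /set0Pn[D /bigcapP hD]].
  by move: pAB; rewrite Pt0 inE.
move: (hD _ pAB) (hD _ pAC) (hD _ pBC).
by move=> /set2P[]-> /set2P[] E1 /set2P[] E2; subst;
  rewrite ?eqxx in nAB nAC nBC.
Qed.

Lemma IPPS_setD_not_subset_block (B1 B2 B' : {set X}) :
  B1 \in Bs -> B2 \in Bs -> B' \in Bs -> B1 != B2 -> B' != B1 -> B' != B2 ->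
  ~ (B1 :\: B2 \subset B').
Proof.
move=> h1 h2 h' n12 n1 n2; rewrite subDset => s12'.
have [[_ card_w] _] := hIPPS.
apply: (IPPS_no_pairwise_cover3 (card_w _ h1) h1 h2 h' n12) => //.
1,2: by rewrite eq_sym.
1,2: exact: subsetUl.
Qed.

End IdentifiableParents.

Theorem proposition4 (X : finType) (v : nat) (Bs : {set {set X}}) :
  IPPS 2 4 v Bs ->
  forall B1 B2 : {set X}, B1 \in Bs -> B2 \in Bs -> B1 != B2 ->
  #|B1 :&: B2| = 2 ->
  ~ (exists B' : {set X},
       [/\ B' \in Bs, B' != B1, B' != B2 &
           (B1 :\: (B1 :&: B2) \subset B') \/ (B2 :\: (B1 :&: B2) \subset B')]).
Proof.
move=> hIPPS B1 B2 h1 h2 n12 _ [B' [h' n1 n2]].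
rewrite !setDIr !setDv set0U setU0.
case=> [|]; apply: (IPPS_setD_not_subset_block hIPPS) => //.
by rewrite eq_sym.
Qed.
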